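(* For any finite simple graph $X$ and any vertex $v$ of $X$, exactly half of the elements $s=((x_1,k_1),\dots,(x_n,k_n))$ of $\mathrm{Fix}(\mathbf{F}^\uparrow)$ satisfy $x_v=1$.
   Context: Let $X$ be a finite simple graph with vertices $1,\dots,n$; $d(v)$ is the degree of $v$ and $n[v]$ the closed neighborhood of $v$. An extended vertex state is $s_v=(x_v,k_v)\in\{0,1\}\times\{1,\dots,d(v)+1\}$; $\mathcal{S}$ is the product of these sets. Let $\sigma(x[v])=|\{u\in n[v]:x_u=1\}|$. The increasing vertex function maps $(x_v,k_v)$ to $(x_v',k_v')$ with $x_v'=1$ iff $\sigma(x[v])\ge k_v$ (else $0$), and $k_v'=k_v+1$ if $x_v=0$ and $\sigma(x[v])\ge k_v$, else $k_v'=k_v$. $\mathbf{F}^\uparrow:\mathcal{S}\to\mathcal{S}$ applies this vertex function at all vertices simultaneously, and $\mathrm{Fix}(\mathbf{F}^\uparrow)$ is its set of fixed points. *)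

From mathcomp Require Import all_boot.
Set Implicit Arguments. Unset Strict Implicit. Unset Printing Implicit Defensive.

Definition simple_graph (n : nat) (e : rel 'I_n) : Prop :=
  symmetric e /\ irreflexive e.

Definition deg n (e : rel 'I_n) (v : 'I_n) : nat := #|[set u | e v u]|.

Definition cnbhd n (e : rel 'I_n) (v : 'I_n) : {set 'I_n} :=
  [set u | (u == v) || e v u].

(* Since k_v <= d(v)+1 <= n,
   the values k_v are stored in 'I_n.+1; the extended state space S is the
   subset of those with 1 <= k_v <= d(v)+1 for every v. *)
Definition state n := ({ffun 'I_n -> bool} * {ffun 'I_n -> 'I_n.+1})%type.

Definition in_S n (e : rel 'I_n) (s : state n) : bool :=
  [forall v, (1 <= s.2 v) && (s.2 v <= (deg e v).+1)].

Definition sigma n (e : rel 'I_n) (x : {ffun 'I_n -> bool}) (v : 'I_n) : nat :=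
  #|[set u in cnbhd e v | x u]|.

Definition Fup n (e : rel 'I_n) (s : state n) : state n :=
  ([ffun v => sigma e s.1 v >= s.2 v],
   [ffun v => if ~~ s.1 v && (sigma e s.1 v >= s.2 v)
              then inord (s.2 v).+1 else s.2 v]).

Definition FixFup n (e : rel 'I_n) : {set state n} :=
  [set s | in_S e s && (Fup e s == s)].

(* The map (x, k) |-> (~~ x, d(u) + 2 - k), applied at every vertex u, is an
   involution of the extended state space.  Since sigma(~~ x)[u] = d(u) + 1 -
   sigma(x)[u], the fixed-point condition x_u = (k_u <= sigma(x)[u]) is carried
   to its negation at the image, so the map preserves Fix(F^up) and flips x_v:
   it pairs the fixed points with x_v = 1 with those with x_v = 0. *)
From mathcomp Require Import all_boot zify.

Set Implicit Arguments. Unset Strict Implicit. Unset Printing Implicit Defensive.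

Lemma card_swapped_by_involution (T : finType) (A : {set T}) (P : pred T)
    (f : T -> T) :
  {in A, forall s, f s \in A} -> {in A, forall s, f (f s) = s} ->
  {in A, forall s, P (f s) = ~~ P s} ->
  2 * #|[set s in A | P s]| = #|A|.
Proof.
move=> fA fK fP; set B := [set s in A | P s].
have sub_BA : B \subset A by apply/subsetP=> s; rewrite inE => /andP[].
have imB : f @: B = A :\: B.
  apply/setP=> s; rewrite !inE; apply/imsetP/andP.
  - case=> t; rewrite inE => /andP[At Pt] ->.
    by rewrite fA // fP // Pt andbF.
  - case=> /nandP notB As; exists (f s); last by rewrite fK.
    by rewrite inE fA // fP //; case: notB => [/negbTE|]; rewrite ?As.
have injB : {in B &, injective f}.
  by move=> s t /(subsetP sub_BA) As /(subsetP sub_BA) At /(congr1 f); rewrite !fK.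
rewrite -(cardsID B A) (setIidPr sub_BA) -imB card_in_imset //.
by rewrite mul2n addnn.
Qed.

Section FixedPointsOfFup.
Variables (n : nat) (e : rel 'I_n).
Hypothesis e_irr : irreflexive e.

Lemma card_cnbhd u : #|cnbhd e u| = (deg e u).+1.
Proof.
have -> : cnbhd e u = u |: [set w | e u w] by apply/setP=> w; rewrite !inE.
by rewrite cardsU1 inE e_irr.
Qed.

Lemma deg_lt u : deg e u < n.
Proof. by have := max_card (cnbhd e u); rewrite card_cnbhd card_ord. Qed.

Lemma sigma_le x u : sigma e x u <= (deg e u).+1.
Proof.
by rewrite -card_cnbhd subset_leq_card //; apply/subsetP=> w; rewrite inE => /andP[].
Qed.

Lemma sigma_negb (x : {ffun 'I_n -> bool}) u :
  sigma e [ffun w => ~~ x w] u = (deg e u).+1 - sigma e x u.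
Proof.
rewrite /sigma -card_cnbhd -(cardsID [set w | x w] (cnbhd e u)).
have -> : [set w in cnbhd e u | x w] = cnbhd e u :&: [set w | x w].
  by apply/setP=> w; rewrite !inE.
have -> : [set w in cnbhd e u | [ffun w => ~~ x w] w] = cnbhd e u :\: [set w | x w].
  by apply/setP=> w; rewrite !inE ffunE andbC.
by rewrite addKn.
Qed.

(* Once x is fixed the k-update is vacuous: it fires only when x_u = 0 and
   sigma(x)[u] >= k_u, i.e. when x_u would change. *)
Lemma FixFupE (s : state n) :
  (s \in FixFup e) = in_S e s && [forall u, s.1 u == (s.2 u <= sigma e s.1 u)].
Proof.
rewrite inE; congr (_ && _); case: s => x k /=.
apply/eqP/forallP => [[Fx _] u | Fx]; first by rewrite -{1}Fx ffunE.
have x_fix : [ffun u => k u <= sigma e x u] = x.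
  by apply/ffunP=> u; rewrite ffunE (eqP (Fx u)).
congr pair => //; apply/ffunP=> u; rewrite ffunE -(eqP (Fx u)).
by case: (x u).
Qed.

Definition flip_state (s : state n) : state n :=
  ([ffun u => ~~ s.1 u], [ffun u => inord ((deg e u).+2 - s.2 u)]).

Lemma flip_state2 (s : state n) u :
  0 < s.2 u -> (flip_state s).2 u = (deg e u).+2 - s.2 u :> nat.
Proof. by move=> k_pos; rewrite ffunE inordK //; have := deg_lt u; lia. Qed.

Lemma flip_state_in_S (s : state n) : in_S e s -> in_S e (flip_state s).
Proof.
move=> /forallP Ss; apply/forallP=> u; have /andP[k_pos k_le] := Ss u.
by rewrite flip_state2 //; apply/andP; split; lia.
Qed.

Lemma flip_stateK (s : state n) : in_S e s -> flip_state (flip_state s) = s.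
Proof.
case: s => x k /forallP Ss; congr pair; apply/ffunP=> u.
  by rewrite !ffunE negbK.
have /andP[k_pos k_le] := Ss u; have deg_u := deg_lt u.
have flip_u := flip_state2 k_pos; move: k_pos k_le => /= k_pos k_le.
by apply: val_inj; rewrite ffunE flip_u //= inordK; lia.
Qed.

Lemma flip_state_Fix (s : state n) : s \in FixFup e -> flip_state s \in FixFup e.
Proof.
rewrite !FixFupE => /andP[Ss /forallP Fs]; rewrite flip_state_in_S //=.
apply/forallP=> u; have /andP[k_pos k_le] := forallP Ss u.
rewrite ffunE sigma_negb flip_state2 //; have := sigma_le s.1 u.
by move: (Fs u); case: (s.1 u) => /eqP Fsu /= sig_le; apply/eqP; lia.
Qed.

End FixedPointsOfFup.

Theorem lemma4p2 (n : nat) (e : rel 'I_n) (v : 'I_n) :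
  simple_graph e ->
  2 * #|[set s in FixFup e | s.1 v]| = #|FixFup e|.
Proof.
move=> [_ e_irr].
have Fix_in_S s : s \in FixFup e -> in_S e s by rewrite inE => /andP[].
apply: (card_swapped_by_involution (P := fun s : state n => s.1 v)
                                   (f := flip_state e)).
- exact: flip_state_Fix.
- by move=> s /Fix_in_S; apply: flip_stateK.
- by move=> s _; rewrite /= ffunE.
Qed.
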